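(* Let $G$ be a connected graph with $n\geq 6$ vertices that has at least one basis forced vertex. Then $|E(G)|\leq \frac{n(n-1)}{2}-4$. Moreover, if $|E(G)|=\frac{n(n-1)}{2}-4$, then the complement $\overline{G}$ is isomorphic to the disjoint union of the path $P_5$ (on 5 vertices) and $n-5$ isolated vertices, and $G$ has exactly two basis forced vertices.
   Context: All graphs are finite and simple. For vertices $u,v$ of a connected graph $G$, $d(u,v)$ is the length of a shortest $u$–$v$ path. A set $R\subseteq V(G)$ is a resolving set if for all distinct $x,y\in V(G)$ there is $r\in R$ with $d(r,x)\neq d(r,y)$. The metric dimension $\dim(G)$ is the minimum cardinality of a resolving set, and a resolving set of cardinality $\dim(G)$ is a metric basis. A vertex is a basis forced vertex if it belongs to every metric basis of $G$. $\overline{G}$ denotes the complement graph of $G$. *)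

From mathcomp Require Import all_boot.
Set Implicit Arguments. Unset Strict Implicit. Unset Printing Implicit Defensive.

Section Graph.
Variables (T : finType) (e : rel T).

Definition simple_graph : Prop := symmetric e /\ irreflexive e.

Definition connected_graph : Prop := forall u v : T, connect e u v.

Definition walk_of_len (u v : T) (k : nat) : bool :=
  [exists p : k.-tuple T, path e u p && (last u p == v)].

(* d(u,v): least k with a u-v walk of length k (shortest walks are paths).
   In a connected graph such k exists and is < #|T|; otherwise #|T|. *)
Definition dist (u v : T) : nat := find (walk_of_len u v) (iota 0 #|T|).

Definition resolving (R : {set T}) : Prop :=
  forall x y : T, x != y -> exists2 r, r \in R & dist r x != dist r y.

Definition metric_basis (R : {set T}) : Prop :=
  resolving R /\ forall S : {set T}, resolving S -> #|R| <= #|S|.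

Definition basis_forced (v : T) : Prop :=
  forall R : {set T}, metric_basis R -> v \in R.

Definition edge_set : {set {set T}} :=
  [set [set x; y] | x in T, y in T & e x y].

Definition compl_rel : rel T := fun x y => (x != y) && ~~ e x y.
End Graph.

(* P_5 on vertices 0..4 plus isolated vertices 5..n-1, on 'I_n *)
Definition P5_plus_isolated (n : nat) : rel 'I_n :=
  fun i j => [&& (i < 5)%N, (j < 5)%N & ((val i == (val j).+1) || (val j == (val i).+1))].

Definition graph_iso (T U : finType) (e1 : rel T) (e2 : rel U) : Prop :=
  exists f : T -> U, bijective f /\ forall x y, e2 (f x) (f y) = e1 x y.

From mathcomp Require Import all_boot zify.
From Stdlib Require Import Classical.
Set Implicit Arguments. Unset Strict Implicit. Unset Printing Implicit Defensive.

(* If the complement of G has at most 4 edges and n >= 6, then G has diameter at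
   most 2, so a set R resolves G iff every two vertices outside R are separated
   by the adjacency of some vertex of R.  Let R be a metric basis containing the
   forced vertex v.  Then R - v does not resolve, and neither does any exchange
   (R - v) + u, as that would be a basis avoiding v; analysing the unresolved
   pairs yields two pairs {x1, y1}, {x2, y2} outside R that only v separates,
   v being adjacent to y1, y2 but not to x1, x2, and a vertex r of R - v adjacent
   to exactly one of y1, y2, say not to y2 and hence not to x2.  Then
   x1 v x2 r y2 is a path of the complement, so the complement has at least
   4 edges.  With exactly 4 they form this P5; reversing it is an automorphism
   exchanging v and r, and a forced vertex must be the second vertex of such a
   path of the complement, that is v or r. *)

Lemma walk_of_len0 (T : finType) (e : rel T) x y : walk_of_len e x y 0 = (x == y).
Proof.
apply/existsP/idP => [[p] | xy]; first by rewrite (tuple0 p).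
by exists [tuple]; rewrite /= xy.
Qed.

Lemma walk_of_len1 (T : finType) (e : rel T) x y : walk_of_len e x y 1 = e x y.
Proof.
apply/existsP/idP => [[[[|z [|]]] //=] | exy].
  by rewrite andbT => _ /andP [exz /eqP <-].
by exists [tuple y]; rewrite /= exy eqxx.
Qed.

Lemma walk_of_len_homo (T : finType) (e : rel T) (f : T -> T) u v k :
  {homo f : x y / e x y} -> walk_of_len e u v k -> walk_of_len e (f u) (f v) k.
Proof.
move=> f_homo /existsP [p /andP [p_path /eqP <-]]; apply/existsP.
by exists [tuple of map f p]; rewrite /= (homo_path f_homo p_path) last_map eqxx.
Qed.

Lemma mem_edge_set (T : finType) (h : rel T) A :
  reflect (exists x y, h x y /\ A = [set x; y]) (A \in edge_set h).
Proof.
apply: (iffP imset2P) => [[x y _] | [x [y [hxy ->]]]].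
  by rewrite inE => hxy ->; exists x, y.
by apply: (Imset2spec (x2 := y)) => //; rewrite inE.
Qed.

Lemma set2_inj (T : finType) (a b c d : T) : [set a; b] = [set c; d] ->
  (a = c /\ b = d) \/ (a = d /\ b = c).
Proof.
move=> E.
have ha : a \in [set c; d] by rewrite -E set21.
have hb : b \in [set c; d] by rewrite -E set22.
have hc : c \in [set a; b] by rewrite E set21.
have hd : d \in [set a; b] by rewrite E set22.
by case/set2P: ha => ?; case/set2P: hb => ?; case/set2P: hc => ?;
  case/set2P: hd => ?; subst; auto.
Qed.

Section GraphAutomorphism.
Variables (T : finType) (e : rel T) (f : T -> T).
Hypotheses (f_bij : bijective f) (f_mono : {mono f : x y / e x y}).

Lemma dist_mono u v : dist e (f u) (f v) = dist e u v.
Proof.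
have [g fK gK] := f_bij.
have g_mono : {mono g : x y / e x y} by move=> x y; rewrite -f_mono !gK.
apply: eq_find => k; apply/idP/idP; last exact/walk_of_len_homo/mono2W.
by move/(walk_of_len_homo (mono2W g_mono)); rewrite !fK.
Qed.

Lemma resolving_mono R : resolving e R -> resolving e (f @: R).
Proof.
have [g fK gK] := f_bij.
move=> R_res x y nxy.
have [|r rR] := R_res (g x) (g y); first by rewrite (can_eq gK).
by exists (f r); [exact: imset_f | rewrite -[x]gK -[y]gK !dist_mono].
Qed.

End GraphAutomorphism.

Lemma basis_forced_mono (T : finType) (e : rel T) (f : T -> T) v :
  bijective f -> {mono f : x y / e x y} -> basis_forced e v -> basis_forced e (f v).
Proof.
move=> f_bij f_mono v_forced R [R_res R_min].
have [g fK gK] := f_bij.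
have g_mono : {mono g : x y / e x y} by move=> x y; rewrite -f_mono !gK.
have g_inj : injective g := can_inj gK.
have /v_forced/imsetP [w wR ->] : metric_basis e (g @: R).
  split; first exact: resolving_mono (Bijective gK fK) g_mono R R_res.
  by move=> S /R_min; rewrite card_imset.
by rewrite gK.
Qed.

Section SimpleGraph.
Variables (T : finType) (e : rel T).
Hypothesis e_simple : simple_graph e.
Let e_sym : symmetric e := proj1 e_simple.
Let e_irr : irreflexive e := proj2 e_simple.
Local Notation H := (compl_rel e).

Lemma compl_rel_sym : symmetric H.
Proof. by move=> x y; rewrite /compl_rel eq_sym e_sym. Qed.

Lemma card_edge_set_compl : #|edge_set e| + #|edge_set H| = 'C(#|T|, 2).
Proof.
have edge_card2 h A : irreflexive h -> A \in edge_set h -> #|A| == 2.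
  move=> h_irr /mem_edge_set [x [y [hxy ->]]].
  have [exy|nxy] := eqVneq x y; first by rewrite exy h_irr in hxy.
  by rewrite cards2 nxy.
have H_irr : irreflexive H by move=> x; rewrite /compl_rel eqxx.
rewrite -card_draws -cardsUI.
have -> : edge_set e :&: edge_set H = set0.
  apply/setP=> A; rewrite !inE; apply/negbTE/andP => -[/mem_edge_set [x [y [exy ->]]]].
  case/mem_edge_set => x' [y' [/andP [_ /negP nexy] /set2_inj [] [? ?]]]; subst.
  - exact: nexy.
  - by rewrite e_sym in nexy.
rewrite cards0 addn0; apply: eq_card => A; rewrite !inE.
apply/idP/idP => [/orP [] /edge_card2 -> // | /cards2P [x [y [nxy ->]]]].
have [exy|nexy] := boolP (e x y); apply/orP; [left | right]; apply/mem_edge_set.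
  by exists x, y.
by exists x, y; rewrite /compl_rel nxy nexy.
Qed.

Lemma compl_rel_mono (f : T -> T) :
  injective f -> {mono f : x y / H x y} -> {mono f : x y / e x y}.
Proof.
move=> f_inj f_mono x y; have [->|nxy] := eqVneq x y; first by rewrite !e_irr.
by have := f_mono x y; rewrite /compl_rel (inj_eq f_inj) nxy => /negb_inj.
Qed.

Definition diameter2 := forall x y, x != y -> ~~ e x y -> exists2 z, e x z & e z y.

Lemma diameter2_compl_sparse : #|edge_set H| < #|T|.-1 -> diameter2.
Proof.
move=> H_sparse x y nxy nexy; apply: NNPP => no_midpoint.
pose edge_to z := if H x z then [set x; z] else [set y; z].
have edge_to_self z : z \in edge_to z by rewrite /edge_to; case: ifP; rewrite set22.
have edge_toH z : z \in ~: [set x; y] -> edge_to z \in edge_set H :\ [set x; y].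
  rewrite in_setC => zxy; rewrite in_setD1; apply/andP; split.
    by apply: contraNneq zxy => <-.
  move: zxy; rewrite in_set2 negb_or => /andP [nzx nzy].
  apply/mem_edge_set; rewrite /edge_to; case: ifP => Hxz; first by exists x, z.
  exists y, z; split=> //; rewrite /compl_rel eq_sym nzy /=.
  apply/negP => eyz; apply: no_midpoint; exists z; last by rewrite e_sym.
  by move: Hxz; rewrite /compl_rel eq_sym nzx => /negbFE.
have edge_to_inj : {in ~: [set x; y] &, injective edge_to}.
  move=> z1 z2; rewrite in_setC => z1xy _ E.
  have := edge_to_self z1; rewrite E /edge_to.
  by case: ifP => _ /set2P [] // z1E; rewrite z1E ?set21 ?set22 in z1xy.
have xyH : [set x; y] \in edge_set H.
  by apply/mem_edge_set; exists x, y; rewrite /compl_rel nxy.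
have edges_sub : edge_to @: (~: [set x; y]) \subset edge_set H :\ [set x; y].
  by apply/subsetP => _ /imsetP [z zC ->]; apply: edge_toH.
have := subset_leq_card edges_sub; rewrite card_in_imset // => card_le.
move: H_sparse; rewrite -(cardsC [set x; y]) cards2 nxy.
rewrite (cardsD1 [set x; y] (edge_set H)) xyH.
by rewrite add1n ltnS ltnNge card_le.
Qed.

Definition adj_resolving (S : {set T}) : bool :=
  [forall x, forall y, [&& x != y, x \notin S & y \notin S] ==>
     [exists r in S, e r x != e r y]].

Lemma adj_resolvingP (S : {set T}) :
  reflect (forall x y, x != y -> x \notin S -> y \notin S ->
             exists2 r, r \in S & e r x != e r y)
          (adj_resolving S).
Proof.
apply: (iffP forallP) => [S_res x y nxy xS yS | S_res x].
  by have /forallP /(_ y) := S_res x; rewrite nxy xS yS => /exists_inP.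
apply/forallP => y; apply/implyP => /and3P [nxy xS yS].
by apply/exists_inP; apply: S_res.
Qed.

Lemma adj_resolvingPn (S : {set T}) : ~~ adj_resolving S ->
  exists x y, [/\ x != y, x \notin S, y \notin S & {in S, forall r, e r x = e r y}].
Proof.
move=> /forallPn [x /forallPn [y]]; rewrite negb_imply => /andP [/and3P [nxy xS yS]].
by move=> /exists_inPn S_twins; exists x, y; split=> // r /S_twins /negbNE /eqP.
Qed.

Section Diameter2.
(* [dist] only searches walk lengths below [#|T|], hence [2 < #|T|]. *)
Hypotheses (e_diam2 : diameter2) (T_ge3 : 2 < #|T|).

Lemma dist_diameter2 x y : dist e x y = if x == y then 0 else if e x y then 1 else 2.
Proof.
rewrite /dist; have -> : #|T| = (#|T| - 3).+3 by lia.
rewrite /= walk_of_len0 walk_of_len1; case: eqP => // /eqP nxy.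
case: ifP => // /negbT nexy; have [z exz ezy] := e_diam2 nxy nexy.
suff -> : walk_of_len e x y 2 by [].
by apply/existsP; exists [tuple z; y]; rewrite /= exz ezy eqxx.
Qed.

Lemma resolving_adj (S : {set T}) : resolving e S <-> adj_resolving S.
Proof.
have dist_neq r x y : r != x -> r != y ->
    (dist e r x != dist e r y) = (e r x != e r y).
  move=> nrx nry; rewrite !dist_diameter2 (negbTE nrx) (negbTE nry).
  by case: (e r x); case: (e r y).
have notin_neq r x : r \in S -> x \notin S -> r != x.
  by move=> rS; apply: contraNneq => <-.
split => [S_res | /adj_resolvingP S_res x y nxy].
  apply/adj_resolvingP => x y nxy xS yS; have [r rS] := S_res x y nxy.
  by rewrite dist_neq; [exists r | exact: notin_neq xS | exact: notin_neq yS].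
have [xS | xS] := boolP (x \in S).
  by exists x => //; rewrite !dist_diameter2 eqxx (negbTE nxy); case: (e x y).
have [yS | yS] := boolP (y \in S).
  by exists y => //; rewrite !dist_diameter2 eqxx (eq_sym y x) (negbTE nxy); case: (e y x).
have [r rS] := S_res x y nxy xS yS.
by rewrite -dist_neq; [exists r | exact: notin_neq xS | exact: notin_neq yS].
Qed.

Lemma metric_basis_exists : exists R, metric_basis e R.
Proof.
have T_res : adj_resolving setT by apply/adj_resolvingP => x y _; rewrite inE.
have [R /resolving_adj R_res R_min] := arg_minnP (fun R : {set T} => #|R|) T_res.
by exists R; split => // S /resolving_adj /R_min.
Qed.

End Diameter2.
End SimpleGraph.

Section BasisExchange.
Variables (T : finType) (e : rel T).
Hypothesis e_sym : symmetric e.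
Variables (R : {set T}) (v : T).
Hypotheses (vR : v \in R) (R_res : adj_resolving e R).
Hypothesis Rv_unresolving : ~~ adj_resolving e (R :\ v).
Hypothesis exchange_unresolving : forall u, u \notin R -> ~~ adj_resolving e (u |: (R :\ v)).

Let R_separates := elimT (adj_resolvingP e R) R_res.

Definition twin_of_v b := b \notin R /\ {in R :\ v, forall r, e r v = e r b}.

Definition split_by_v x y :=
  [/\ x \notin R, y \notin R, ~~ e v x, e v y & {in R :\ v, forall r, e r x = e r y}].

Lemma twins_minus_v_cases a b :
  a != b -> a \notin R :\ v -> b \notin R :\ v -> {in R :\ v, forall r, e r a = e r b} ->
  [\/ a = v /\ twin_of_v b, b = v /\ twin_of_v a, split_by_v a b | split_by_v b a].
Proof.
move=> nab aRv bRv ab_twins.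
have notinR c : c != v -> c \notin R :\ v -> c \notin R by rewrite in_setD1 => ->.
have [avE | nav] := eqVneq a v.
  subst a; constructor 1; split=> //; split=> //.
  by apply: notinR; rewrite // eq_sym.
have [bvE | nbv] := eqVneq b v.
  subst b; constructor 2; split=> //; split => [|r /ab_twins ->] //.
  exact: notinR.
have [aR bR] := (notinR a nav aRv, notinR b nbv bRv).
have [r rR rab] := R_separates nab aR bR.
have rvE : r = v.
  by apply: contraNeq rab => nrv; rewrite ab_twins // in_setD1 nrv.
subst r; have [va | nva] := boolP (e v a).
  constructor 4; split=> //; last by move=> r /ab_twins ->.
  by move: rab; rewrite va; case: (e v b).
by constructor 3; split=> //; move: rab; rewrite (negbTE nva); case: (e v b).
Qed.

Lemma twin_of_v_split b b' :
  twin_of_v b -> twin_of_v b' -> b != b' -> split_by_v b b' \/ split_by_v b' b.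
Proof.
move=> [bR b_twin] [b'R b'_twin] nbb'.
have bb'_twins : {in R :\ v, forall r, e r b = e r b'}.
  by move=> r rRv; rewrite -b_twin ?b'_twin.
have notinRv c : c \notin R -> c \notin R :\ v.
  by move=> cR; rewrite in_setD1 (negbTE cR) andbF.
case: (twins_minus_v_cases nbb' (notinRv b bR) (notinRv b' b'R) bb'_twins);
  [move=> [bv _] | move=> [b'v _] | left | right] => //.
  by rewrite bv vR in bR.
by rewrite b'v vR in b'R.
Qed.

Lemma delete_v_twins : (exists b, twin_of_v b) \/ (exists x y, split_by_v x y).
Proof.
have [a [b [nab aRv bRv ab_twins]]] := adj_resolvingPn Rv_unresolving.
case: (twins_minus_v_cases nab aRv bRv ab_twins) => [[_ ?] | [_ ?] | ? | ?].
- by left; exists b.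
- by left; exists a.
- by right; exists a, b.
- by right; exists b, a.
Qed.

Lemma exchange_twins u : u \notin R ->
  (exists2 b, twin_of_v b & b != u /\ e u v = e u b) \/
  (exists x y, split_by_v x y /\ [/\ x != u, y != u & e u x = e u y]).
Proof.
move=> uR; have [a [b [nab]]] := adj_resolvingPn (exchange_unresolving uR).
rewrite !in_setU1 !negb_or => /andP [nau aRv] /andP [nbu bRv] ab_twins.
have u_ab : e u a = e u b by apply: ab_twins; rewrite setU11.
have Rv_ab : {in R :\ v, forall r, e r a = e r b}.
  by move=> r rRv; apply: ab_twins; rewrite in_setU1 rRv orbT.
case: (twins_minus_v_cases nab aRv bRv Rv_ab) => [[av ?] | [bv ?] | ? | ?]; subst.
- by left; exists b.
- by left; exists a.
- by right; exists a, b.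
- by right; exists b, a.
Qed.

Lemma split_by_v_injl x x' y : split_by_v x y -> split_by_v x' y -> x = x'.
Proof.
move=> [xR _ nvx _ xy_twins] [x'R _ nvx' _ x'y_twins].
apply: contraTeq isT => nxx'; have [r rR] := R_separates nxx' xR x'R.
have [-> | nrv] := eqVneq r v; first by rewrite (negbTE nvx) (negbTE nvx').
by rewrite xy_twins ?x'y_twins ?eqxx // in_setD1 nrv.
Qed.

Lemma split_by_v_injr x y y' : split_by_v x y -> split_by_v x y' -> y = y'.
Proof.
move=> [_ yR _ vy xy_twins] [_ y'R _ vy' xy'_twins].
apply: contraTeq isT => nyy'; have [r rR] := R_separates nyy' yR y'R.
have [-> | nrv] := eqVneq r v; first by rewrite vy vy'.
by rewrite -xy_twins -?xy'_twins ?eqxx // in_setD1 nrv.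
Qed.

Lemma split_by_v_exists : exists x y, split_by_v x y.
Proof.
apply: NNPP => no_split.
have [[b b_twin] | //] := delete_v_twins.
have [[b' b'_twin [nb'b _]] | [x [y [sxy _]]]] := exchange_twins (proj1 b_twin).
  by case: (twin_of_v_split b'_twin b_twin nb'b) => sp; apply: no_split;
    [exists b', b | exists b, b'].
by apply: no_split; exists x, y.
Qed.

Lemma two_splits_by_v :
  exists x1 y1 x2 y2, [/\ split_by_v x1 y1, split_by_v x2 y2 & x1 != x2].
Proof.
(* Otherwise (x1, y1) is the only pair split by v, and exchanging v for x1, for
   y1, and for the twins of v this produces, always leads to a second one. *)
apply: NNPP => no_two; have [x1 [y1 s1]] := split_by_v_exists.
have split_uniq x y : split_by_v x y -> x = x1 /\ y = y1.
  move=> sxy; have xx1 : x = x1.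
    by apply: NNPP => nxx1; apply: no_two; exists x, y, x1, y1; split=> //; apply/eqP.
  by subst x; split=> //; apply: split_by_v_injr sxy s1.
have [x1R y1R nvx1 vy1 _] := s1.
have [[b b_twin [nbx1 x1_vb]] | [x [y [sxy [nxx1 _ _]]]]] :=
  exchange_twins x1R; last first.
  by case: (split_uniq x y sxy) => xx1 _; rewrite xx1 eqxx in nxx1.
have [[b' b'_twin [nb'y1 y1_vb']] | [x [y [sxy [_ nyy1 _]]]]] :=
  exchange_twins y1R; last first.
  by case: (split_uniq x y sxy) => _ yy1; rewrite yy1 eqxx in nyy1.
have nx1b : ~~ e x1 b by rewrite -x1_vb e_sym.
have y1b' : e y1 b' by rewrite -y1_vb' e_sym.
have [bb' | nbb'] := eqVneq b b'; last first.
  case: (twin_of_v_split b_twin b'_twin nbb') => /split_uniq [? ?]; subst.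
    by rewrite eqxx in nbx1.
  by rewrite e_sym y1b' in nx1b.
subst b'; have [[b'' b''_twin [nb''b _]] | [x [y [sxy [_ _ bxy]]]]] :=
  exchange_twins (proj1 b_twin).
  by rewrite eq_sym in nb''b; case: (twin_of_v_split b_twin b''_twin nb''b) =>
    /split_uniq [bE b''E]; [rewrite bE eqxx in nbx1 | rewrite b''E eqxx in nb'y1].
have [xE yE] := split_uniq x y sxy; subst x y.
by move: bxy; rewrite e_sym (negbTE nx1b) e_sym y1b'.
Qed.

Lemma compl_path_of_splits x1 y1 x2 y2 r :
  split_by_v x1 y1 -> split_by_v x2 y2 -> x1 != x2 -> r \in R :\ v -> ~~ e r y2 ->
  path (compl_rel e) x1 [:: v; x2; r; y2] && uniq [:: x1; v; x2; r; y2].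
Proof.
move=> [x1R _ nvx1 _ _] [x2R y2R nvx2 vy2 x2y2_twins] nx12 /setD1P [nrv rR] nry2.
have neqR a b : a \notin R -> b \in R -> a != b.
  by move=> aR bR; apply: contraNneq aR => ->.
have x1v := neqR x1 v x1R vR; have x1r := neqR x1 r x1R rR.
have x2v := neqR x2 v x2R vR; have x2r := neqR x2 r x2R rR.
have y2v := neqR y2 v y2R vR; have y2r := neqR y2 r y2R rR.
have nrx2 : ~~ e r x2 by rewrite x2y2_twins // in_setD1 nrv.
have nx1y2 : x1 != y2 by apply: contraNneq nvx1 => ->.
have nx2y2 : x2 != y2 by apply: contraNneq nvx2 => ->.
rewrite /= /compl_rel !inE !negb_or x1v x1r x2r nx12 nx1y2 nx2y2 nry2.
by rewrite ![v == _]eq_sym (eq_sym r y2) x2v y2v y2r nrv (e_sym x1) nvx1 nvx2 (e_sym x2) nrx2.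
Qed.

Lemma compl_path_through_v :
  exists x1 x2 r y2, path (compl_rel e) x1 [:: v; x2; r; y2] && uniq [:: x1; v; x2; r; y2].
Proof.
have [x1 [y1 [x2 [y2 [s1 s2 nx12]]]]] := two_splits_by_v.
have ny12 : y1 != y2.
  by apply: contraNneq nx12 => y12; subst y2; apply/eqP; apply: split_by_v_injl s1 s2.
have [[_ y1R _ vy1 _] [_ y2R _ vy2 _]] := (s1, s2).
have [r rR ry12] := R_separates ny12 y1R y2R.
have rRv : r \in R :\ v.
  by rewrite in_setD1 rR andbT; apply: contraNneq ry12 => ->; rewrite vy1 vy2.
have [ry2 | nry2] := boolP (e r y2).
  exists x2, x1, r, y1; apply: compl_path_of_splits s2 s1 _ rRv _; first by rewrite eq_sym.
  by move: ry12; rewrite ry2; case: (e r y1).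
by exists x1, x2, r, y2; apply: compl_path_of_splits s1 s2 nx12 rRv nry2.
Qed.

End BasisExchange.

Lemma forced_compl_path (T : finType) (e : rel T) (v : T) :
  simple_graph e -> diameter2 e -> 2 < #|T| -> basis_forced e v ->
  exists x1 x2 r y2,
    path (compl_rel e) x1 [:: v; x2; r; y2] && uniq [:: x1; v; x2; r; y2].
Proof.
move=> [e_sym _] e_diam2 T_ge3 v_forced.
have res_adj := resolving_adj e_diam2 T_ge3.
have [R [R_res R_min]] := metric_basis_exists e_diam2 T_ge3.
have vR := v_forced R (conj R_res R_min).
apply: (compl_path_through_v e_sym vR); first exact/res_adj.
  by apply/negP => /res_adj /R_min; rewrite (cardsD1 v R) vR ltnn.
move=> u uR; apply/negP => /res_adj uRv_res.
have uRv : u \notin R :\ v by rewrite in_setD1 negb_and uR orbT.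
have /v_forced : metric_basis e (u |: (R :\ v)).
  by split=> // S /R_min; rewrite cardsU1 uRv (cardsD1 v R) vR.
by rewrite in_setU1 in_setD1 eqxx /= orbF => /eqP vu; rewrite -vu vR in uR.
Qed.

Definition adjacent_in (T : eqType) (p : seq T) (a b : T) : bool :=
  [&& a \in p, b \in p & (index a p == (index b p).+1) || (index b p == (index a p).+1)].

Section PathEdges.
Variables (T : finType) (h : rel T).

Definition path_edges (x : T) (s : seq T) : {set {set T}} :=
  [set [set nth x (x :: s) i; nth x s i] | i : 'I_(size s)].

Lemma card_path_edges x s : uniq (x :: s) -> #|path_edges x s| = size s.
Proof.
move=> p_uniq; rewrite card_imset ?card_ord // => i j /set2_inj.
have nth_inj k l : k <= size s -> l <= size s ->
    nth x (x :: s) k = nth x (x :: s) l -> k = l.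
  by move=> ks ls /eqP; rewrite nth_uniq ?ltnS // => /eqP.
have [ilt jlt] := (ltn_ord i, ltn_ord j).
case=> [[E _] | [E1 E2]]; apply: val_inj.
  by apply: nth_inj E; apply: ltnW.
have := nth_inj i j.+1 (ltnW ilt) jlt E1.
have := nth_inj i.+1 j ilt (ltnW jlt) E2.
lia.
Qed.

Lemma path_edges_sub x s : path h x s -> path_edges x s \subset edge_set h.
Proof.
move=> /(pathP x) x_path; apply/subsetP => _ /imsetP [i _ ->].
by apply/mem_edge_set; do 2 eexists; split; [apply: x_path | reflexivity].
Qed.

Lemma adjacent_in_path_edges x s a b :
  uniq (x :: s) -> [set a; b] \in path_edges x s -> adjacent_in (x :: s) a b.
Proof.
move=> p_uniq /imsetP [i _ /set2_inj].
have ilt : i < size (x :: s) by rewrite ltnS ltnW.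
have ilt' : i.+1 < size (x :: s) by rewrite ltnS ltn_ord.
have [idx_i idx_i1] := (index_uniq x ilt p_uniq, index_uniq x ilt' p_uniq).
rewrite -[nth x s i]/(nth x (x :: s) i.+1) /adjacent_in.
by case=> [] [-> ->]; rewrite !mem_nth // idx_i idx_i1 eqxx ?orbT.
Qed.

Lemma adjacent_in_path x s a b :
  symmetric h -> path h x s -> adjacent_in (x :: s) a b -> h a b.
Proof.
move=> h_sym /(pathP x) x_path /and3P [ap bp].
have ai : index a (x :: s) < (size s).+1 by rewrite index_mem.
have bi : index b (x :: s) < (size s).+1 by rewrite index_mem.
case/orP => /eqP idx; rewrite -(nth_index x ap) -(nth_index x bp) idx.
  by rewrite h_sym; apply: x_path; rewrite -ltnS -idx.
by apply: x_path; rewrite -ltnS -idx.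
Qed.

Lemma size_path_le_card_edges x s :
  path h x s -> uniq (x :: s) -> size s <= #|edge_set h|.
Proof.
move=> x_path p_uniq.
by rewrite -(card_path_edges p_uniq) subset_leq_card ?path_edges_sub.
Qed.

Lemma rel_eq_adjacent_in_path x s :
  symmetric h -> path h x s -> uniq (x :: s) -> #|edge_set h| <= size s ->
  h =2 adjacent_in (x :: s).
Proof.
move=> h_sym x_path p_uniq h_sparse a b.
have edgesE : edge_set h = path_edges x s.
  by apply/esym/eqP; rewrite eqEcard path_edges_sub // card_path_edges.
apply/idP/idP => [hab | ]; last exact: adjacent_in_path.
by apply: adjacent_in_path_edges; rewrite // -edgesE; apply/mem_edge_set; exists a, b.
Qed.

End PathEdges.

Section PathReflection.
Variables (T : eqType) (p : seq T).
Hypothesis p_uniq : uniq p.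

Definition path_reflect (z : T) : T := nth z (rev p) (index z p).

Lemma path_reflect_notin z : z \notin p -> path_reflect z = z.
Proof. by move=> zp; rewrite /path_reflect nth_default // size_rev memNindex. Qed.

Lemma path_reflect_in z : z \in p ->
  path_reflect z \in p /\ index (path_reflect z) p = (size p).-1 - index z p.
Proof.
move=> zp; have zi : index z p < size p by rewrite index_mem.
have ri : size p - (index z p).+1 < size p by lia.
rewrite /path_reflect nth_rev // mem_nth // index_uniq //; split=> //; lia.
Qed.

Lemma mem_path_reflect z : (path_reflect z \in p) = (z \in p).
Proof.
have [zp | zp] := boolP (z \in p); last by rewrite path_reflect_notin // (negbTE zp).
by case: (path_reflect_in zp) => ->.
Qed.

Lemma path_reflectK : involutive path_reflect.
Proof.
move=> z; have [zp | zp] := boolP (z \in p); last by rewrite !path_reflect_notin.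
have [rzp rzi] := path_reflect_in zp.
have zi : index z p < size p by rewrite index_mem.
rewrite {1}/path_reflect rzi nth_rev; last by lia.
have -> : size p - ((size p).-1 - index z p).+1 = index z p by lia.
by rewrite (set_nth_default z) ?nth_index.
Qed.

Lemma adjacent_in_reflect : {mono path_reflect : a b / adjacent_in p a b}.
Proof.
move=> a b; rewrite /adjacent_in !mem_path_reflect.
have [ap | //] := boolP (a \in p); have [bp | //] := boolP (b \in p).
have [[_ ->] [_ ->]] := (path_reflect_in ap, path_reflect_in bp).
have [ai bi] := (index_mem a p, index_mem b p); rewrite ap bp in ai bi.
by apply/orP/orP => -[/eqP idx | /eqP idx]; [right | left | right | left]; apply/eqP; lia.
Qed.

End PathReflection.

Lemma graph_iso_P5_plus_isolated (T : finType) (h : rel T) (p : seq T) :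
  uniq p -> size p = 5 -> h =2 adjacent_in p -> graph_iso h (@P5_plus_isolated #|T|).
Proof.
move=> p_uniq p5 hE; pose s := p ++ [seq z <- enum T | z \notin p].
have s_uniq : uniq s.
  rewrite cat_uniq p_uniq filter_uniq ?enum_uniq // andbT /=.
  by apply/hasPn => z; rewrite mem_filter => /andP [].
have mem_s z : z \in s by rewrite mem_cat mem_filter mem_enum andbT orbN.
have s_size : size s = #|T|.
  by rewrite -(card_uniqP s_uniq) cardT; apply: eq_cardT.
have idx_lt z : index z s < #|T| by rewrite -s_size index_mem.
exists (fun z => Ordinal (idx_lt z)); split.
  exists (fun i : 'I_#|T| => nth (enum_default i) s i) => [z | i].
    exact: nth_index (mem_s z).
  by apply: val_inj; rewrite /= index_uniq ?s_size.
move=> a b; rewrite /P5_plus_isolated /= hE /adjacent_in !index_cat p5.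
have [ap | ap] := boolP (a \in p); last by rewrite ltnNge leq_addr.
have [bp | bp] := boolP (b \in p); last by rewrite [_ + _ < 5]ltnNge leq_addr andbF.
by rewrite -p5 !index_mem ap bp.
Qed.

Lemma adjacent_in_path5_center (T : eqType) (h : rel T) (p : seq T) a w c d f :
  uniq p -> size p = 5 -> h =2 adjacent_in p ->
  path h a [:: w; c; d; f] -> uniq [:: a; w; c; d; f] ->
  w \in p /\ index w p \in [:: 1; 3].
Proof.
move=> p_uniq p5 hE; rewrite /= andbT !hE /adjacent_in.
move=> /and4P [/and3P [ap wp aw] /and3P [_ cp wc] /and3P [_ dp cd] /and3P [_ fp df]].
rewrite !inE !negb_or => /and4P [/and4P [_ ac _ _] /and3P [_ wd _] /andP [_ cf] _].
have idx_lt x : x \in p -> index x p < 5 by rewrite -p5 index_mem.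
have idx_neq x y : x \in p -> y \in p -> x != y -> index x p != index y p.
  by move=> xp yp; apply: contra => /eqP E; rewrite -(nth_index x xp) E nth_index.
move: (idx_neq a c ap cp ac) (idx_neq w d wp dp wd) (idx_neq c f cp fp cf).
move: (idx_lt a ap) (idx_lt w wp) (idx_lt c cp) (idx_lt d dp) (idx_lt f fp).
move=> *; split=> //; lia.
Qed.

Section ForcedVertexCompl.
Variables (T : finType) (e : rel T).
Hypotheses (e_simple : simple_graph e) (T_ge6 : 6 <= #|T|).
Local Notation H := (compl_rel e).

Let T_ge3 : 2 < #|T| := leq_trans (isT : 3 <= 6) T_ge6.

Lemma sparse_compl_diameter2 : #|edge_set H| <= 4 -> diameter2 e.
Proof. by move=> H_le4; apply: diameter2_compl_sparse; rewrite // -subn1; lia. Qed.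

Lemma forced_compl_edges_ge4 v : basis_forced e v -> 4 <= #|edge_set H|.
Proof.
move=> v_forced; rewrite leqNgt; apply/negP => H_lt4.
have [x1 [x2 [r [y2 /andP [x1_path p_uniq]]]]] :=
  forced_compl_path e_simple (sparse_compl_diameter2 (ltnW H_lt4)) T_ge3 v_forced.
by have := size_path_le_card_edges x1_path p_uniq; rewrite leqNgt H_lt4.
Qed.

Lemma extremal_compl_path v : basis_forced e v -> #|edge_set H| = 4 ->
  exists x1 x2 r y2,
    uniq [:: x1; v; x2; r; y2] /\ H =2 adjacent_in [:: x1; v; x2; r; y2].
Proof.
move=> v_forced H4.
have [x1 [x2 [r [y2 /andP [x1_path p_uniq]]]]] :=
  forced_compl_path e_simple (sparse_compl_diameter2 (eq_leq H4)) T_ge3 v_forced.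
exists x1, x2, r, y2; split=> //.
by apply: rel_eq_adjacent_in_path x1_path p_uniq _; rewrite ?H4 //; apply: compl_rel_sym.
Qed.

Lemma basis_forced_compl_P5 x1 v x2 r y2 :
  #|edge_set H| <= 4 -> uniq [:: x1; v; x2; r; y2] ->
  H =2 adjacent_in [:: x1; v; x2; r; y2] -> basis_forced e v ->
  forall w, basis_forced e w <-> w = v \/ w = r.
Proof.
set p := [:: x1; v; x2; r; y2] => H_le4 p_uniq HE v_forced w.
split => [w_forced | [-> // | ->]].
  have [x1' [x2' [r' [y2' /andP [x1'_path p'_uniq]]]]] :=
    forced_compl_path e_simple (sparse_compl_diameter2 H_le4) T_ge3 w_forced.
  have [wp] := adjacent_in_path5_center p_uniq erefl HE x1'_path p'_uniq.
  rewrite !inE => /orP [] /eqP w_idx.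
    by left; rewrite -(nth_index w wp) w_idx.
  by right; rewrite -(nth_index w wp) w_idx.
have H_mono : {mono path_reflect p : a b / H a b}.
  by move=> a b; rewrite !HE (adjacent_in_reflect p_uniq).
have refl_inv := path_reflectK p_uniq.
have e_mono := compl_rel_mono e_simple (inv_inj refl_inv) H_mono.
have -> : r = path_reflect p v.
  have v_idx : index v p = 1 := index_uniq v (isT : 1 < size p) p_uniq.
  have [rvp rv_idx] := path_reflect_in p_uniq (mem_nth v (isT : 1 < size p)).
  by rewrite -(nth_index r rvp) rv_idx v_idx.
exact: basis_forced_mono (inv_bij refl_inv) e_mono v_forced.
Qed.

End ForcedVertexCompl.

Theorem theorem7 (T : finType) (e : rel T) :
  simple_graph e -> connected_graph e -> 6 <= #|T| ->
  (exists v : T, basis_forced e v) ->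
  #|edge_set e| <= #|T| * (#|T| - 1) %/ 2 - 4 /\
  (#|edge_set e| = #|T| * (#|T| - 1) %/ 2 - 4 ->
     graph_iso (compl_rel e) (@P5_plus_isolated #|T|) /\
     exists v1 v2 : T, v1 != v2 /\
       forall v : T, basis_forced e v <-> v = v1 \/ v = v2).
Proof.
move=> e_simple _ T_ge6 [v v_forced].
have := card_edge_set_compl e_simple; rewrite bin2 -divn2 subn1 => edges_sum.
have H_ge4 := forced_compl_edges_ge4 e_simple T_ge6 v_forced.
split=> [| e_max]; first lia.
have H4 : #|edge_set (compl_rel e)| = 4 by lia.
have [x1 [x2 [r [y2 [p_uniq HE]]]]] := extremal_compl_path e_simple T_ge6 v_forced H4.
split; first exact: graph_iso_P5_plus_isolated p_uniq erefl HE.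
exists v, r; split.
  by move: p_uniq; rewrite /= !inE !negb_or => /and4P [_ /and3P [_ ? _] _ _].
by apply: (basis_forced_compl_P5 e_simple T_ge6 (eq_leq H4) p_uniq HE).
Qed.
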